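(* There exists a sequence $(G_n)_{n\in\mathbb{N}}$ of connected graphs such that $|V(G_n)|=n$ for all $n$, $R_2(G_n)=O(n\log n)$ and $R_3(G_n)=\Omega(n\log^2 n)$.
   Context: For a graph $G$ and integer $r\geqslant 2$, the $r$-colour Ramsey number $R_r(G)$ is the smallest integer $N$ such that every colouring of the edges of the complete graph $K_N$ with $r$ colours contains a copy of $G$ all of whose edges have the same colour. *)

From mathcomp Require Import all_boot.
From Stdlib Require Import Reals.

Set Implicit Arguments.
Unset Strict Implicit.
Unset Printing Implicit Defensive.

Definition simple_graph (n : nat) (e : rel 'I_n) : Prop :=
  (forall x y, e x y = e y x) /\ (forall x, e x x = false).

Definition connected_graph (n : nat) (e : rel 'I_n) : Prop :=
  forall x y : 'I_n, connect e x y.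

(* An r-colouring of the edges of K_N: a symmetric map on pairs of vertices
   (values on the diagonal are irrelevant). *)
Definition edge_colouring (r N : nat) (col : 'I_N -> 'I_N -> 'I_r) : Prop :=
  forall x y, col x y = col y x.

Definition mono_copy (r N n : nat) (col : 'I_N -> 'I_N -> 'I_r)
  (e : rel 'I_n) (c : 'I_r) : Prop :=
  exists f : 'I_n -> 'I_N, injective f /\
    forall u v, e u v -> col (f u) (f v) = c.

Definition ramsey_arrow (r N n : nat) (e : rel 'I_n) : Prop :=
  forall col : 'I_N -> 'I_N -> 'I_r, edge_colouring col ->
    exists c : 'I_r, mono_copy col e c.

(* R_r(G) <= M  (R_r(G) is the least N with K_N -> (G)_r). *)
Definition ramsey_le (r n : nat) (e : rel 'I_n) (M : R) : Prop :=
  exists N : nat, (INR N <= M)%R /\ ramsey_arrow r N e.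

Definition ramsey_ge (r n : nat) (e : rel 'I_n) (M : R) : Prop :=
  forall N : nat, (INR N < M)%R -> ~ ramsey_arrow r N e.

From Stdlib Require Import Reals Lra Psatz.
From mathcomp Require Import all_boot zify.

(* G_n is a clique on k = trunc_log 4 n vertices with the remaining n - k vertices
   attached as leaves to one clique vertex: a k-clique through a vertex of degree n - 1.

   Two colours, N = 4^k + 2k(n-1) + 2n vertices: every vertex has degree at least n - 1
   in some colour. If 4^k vertices have this in both colours, Erdos-Szekeres gives a
   monochromatic k-clique among them. Otherwise k(n-1) vertices, say, have blue degree
   below n - 1; they all have red degree at least n - 1, and the greedy algorithm finds
   a red k-clique among them. Either way G_n embeds, so R_2(G_n) = O(n log n).

   Three colours, K^2 d vertices with K = k - 1 and d = n - 1: cut them into K^2 blocks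
   of size d indexed by pairs (i, j). Colour 0 joins vertices of a block, colour 1
   blocks with different i, colour 2 the rest. The colour-0 components are too small
   for the connected G_n, and colours 1 and 2 are K-partite, so they have no K+1-clique.
   Hence R_3(G_n) > K^2 d = Omega(n log^2 n). *)

Set Implicit Arguments.
Unset Strict Implicit.
Unset Printing Implicit Defensive.

(* zify loads ssralg, which takes over the %R delimiter of the statement. *)
Delimit Scope R_scope with R.

Section Cliques.
Variable T : finType.
Implicit Types (r : rel T) (S Q D : {set T}) (x y : T) (d m : nat).

Definition relC r : rel T := fun x y => ~~ r x y.

Definition nbhd r x : {set T} := [set y | r x y] :\ x.

Definition deg_ge r d : {set T} := [set x | d <= #|nbhd r x|].

Definition clique r Q := {in Q &, forall x y, x != y -> r x y}.

Definition has_clique r S m := exists Q, [/\ Q \subset S, clique r Q & m <= #|Q|].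

Lemma relC_sym r : symmetric r -> symmetric (relC r).
Proof. by move=> r_sym x y; rewrite /relC r_sym. Qed.

Lemma nbhd_relCK r x : nbhd (relC (relC r)) x = nbhd r x.
Proof. by apply/setP=> y; rewrite !inE /relC negbK. Qed.

Lemma deg_ge_relCK r d : deg_ge (relC (relC r)) d = deg_ge r d.
Proof. by apply/setP=> x; rewrite !inE nbhd_relCK. Qed.

Lemma card_nbhd_relC r S x : x \in S ->
  #|S :&: nbhd r x| + #|S :&: nbhd (relC r) x| = #|S|.-1.
Proof.
move=> xS; rewrite (cardsD1 x S) xS -(cardsID [set y | r x y] (S :\ x)) /=.
rewrite add0n; congr (_ + _); apply: eq_card => y; rewrite !inE /relC.
  by case: (y \in S); case: (y != x).
by case: (y \in S); case: (y != x); case: (r x y).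
Qed.

Lemma clique_sub_nbhd r Q x : clique r Q -> x \in Q -> Q :\ x \subset nbhd r x.
Proof.
move=> cQ xQ; apply/subsetP=> y; rewrite !inE => /andP[yx yQ].
by rewrite yx cQ // eq_sym.
Qed.

Lemma has_clique0 r S : has_clique r S 0.
Proof. by exists set0; split; [exact: sub0set | move=> x; rewrite inE |]. Qed.

Lemma has_cliqueS r S S' m : S \subset S' -> has_clique r S m -> has_clique r S' m.
Proof.
by move=> sSS' [Q [sQS cQ mQ]]; exists Q; split=> //; apply: subset_trans sSS'.
Qed.

Lemma has_clique_nbhd r S x m : symmetric r -> x \in S ->
  has_clique r (S :&: nbhd r x) m -> has_clique r S m.+1.
Proof.
move=> r_sym xS [Q [sQ cQ mQ]].
have {}sQ y : y \in Q -> [/\ y \in S, y != x & r x y].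
  by move/(subsetP sQ); rewrite !inE => /and3P[-> -> ->].
have xQ : x \notin Q by apply/negP=> /sQ[_ /eqP].
exists (x |: Q); split; last by rewrite cardsU1 xQ.
- by rewrite subUset sub1set xS; apply/subsetP=> y /sQ[].
- move=> y z; rewrite !inE => /predU1P[-> | yQ] /predU1P[-> | zQ]; rewrite ?eqxx //.
  + by case/sQ: zQ.
  + by case/sQ: yQ => _ _; rewrite r_sym.
  + exact: cQ.
Qed.

Lemma ramsey_has_clique r a b S : symmetric r -> 2 ^ (a + b) <= #|S| ->
  has_clique r S a \/ has_clique (relC r) S b.
Proof.
move=> r_sym; elim: a b S => [|a IHa] b S; first by left; apply: has_clique0.
elim: b S => [|b IHb] S leS; first by right; apply: has_clique0.
have [x xS] : exists x, x \in S by apply/card_gt0P; rewrite (leq_trans _ leS) ?expn_gt0.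
have cardS := card_nbhd_relC r xS; rewrite addSn addnS expnS in leS.
have [leR|leC] : 2 ^ (a + b).+1 <= #|S :&: nbhd r x| \/
                 2 ^ (a + b).+1 <= #|S :&: nbhd (relC r) x| by lia.
- case: (IHa b.+1 (S :&: nbhd r x)) => [|cl|cl]; [by rewrite addnS | left | right].
    exact: has_clique_nbhd cl.
  exact: has_cliqueS (subsetIl _ _) cl.
- case: (IHb (S :&: nbhd (relC r) x)) => [|cl|cl]; [by rewrite addSn | left | right].
    exact: has_cliqueS (subsetIl _ _) cl.
  exact: has_clique_nbhd (relC_sym r_sym) xS cl.
Qed.

Lemma has_clique_low_codegree r d m D : symmetric r ->
  {in D, forall x, #|D :&: nbhd (relC r) x| <= d} -> m * d.+1 <= #|D| ->
  has_clique r D m.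
Proof.
move=> r_sym; elim: m D => [|m IH] D codeg leD; first exact: has_clique0.
have [x xD] : exists x, x \in D by apply/card_gt0P; lia.
have cardD := card_nbhd_relC r xD; have codeg_x := codeg x xD.
apply: (has_clique_nbhd r_sym xD); apply: IH; last by lia.
move=> y /setIP[yD _]; apply: leq_trans (codeg y yD).
by apply: subset_leq_card; rewrite setSI // subsetIl.
Qed.

Lemma deg_ge_cover r n : n.*2 <= #|T| -> deg_ge r n.-1 :|: deg_ge (relC r) n.-1 = setT.
Proof.
move=> leT; apply/setP=> x; rewrite !inE.
have := card_nbhd_relC r (in_setT x); rewrite !setTI cardsT.
move=> card_x; apply/orP; case: (leqP n.-1 #|nbhd r x|) => [|lt_deg]; [left | right] => //.
lia.
Qed.

Lemma has_clique_deg_ge r k n : symmetric r -> 1 < n -> n.*2 <= #|T| ->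
  k * n.-1 <= #|~: deg_ge (relC r) n.-1| -> has_clique r (deg_ge r n.-1) k.
Proof.
move=> r_sym n_gt1 leT leD.
have sub : ~: deg_ge (relC r) n.-1 \subset deg_ge r n.-1.
  apply/subsetP=> x; rewrite inE => /negbTE xC.
  by have /setP/(_ x) := deg_ge_cover r leT; rewrite in_setU xC orbF in_setT => ->.
apply: has_cliqueS sub _; apply: (has_clique_low_codegree (d := n.-2)) => //.
  move=> x; rewrite !inE -ltnNge => lt_deg.
  by apply: leq_trans (subset_leq_card (subsetIr _ _)) _; lia.
by have -> : n.-2.+1 = n.-1 by lia.
Qed.

Lemma ramsey2_has_clique_deg_ge r k n : symmetric r -> 1 < n ->
  4 ^ k + (k * n.-1).*2 + n.*2 <= #|T| ->
  has_clique r (deg_ge r n.-1) k \/ has_clique (relC r) (deg_ge (relC r) n.-1) k.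
Proof.
move=> r_sym n_gt1 leT; have leT2 : n.*2 <= #|T| by lia.
set R := deg_ge r n.-1; set B := deg_ge (relC r) n.-1.
have [leI | ltI] := leqP (4 ^ k) #|R :&: B|.
  have : 2 ^ (k + k) <= #|R :&: B| by rewrite expnD -expnMn.
  case/(ramsey_has_clique r_sym) => cl; [left | right].
    exact: has_cliqueS (subsetIl _ _) cl.
  exact: has_cliqueS (subsetIr _ _) cl.
have := cardsUI R B; rewrite deg_ge_cover // cardsT.
have := cardsC R; have := cardsC B => cardB cardR cardRB.
have [leB | leR] : k * n.-1 <= #|~: B| \/ k * n.-1 <= #|~: R| by lia.
  by left; apply: has_clique_deg_ge.
right; apply: has_clique_deg_ge (relC_sym r_sym) _ _ _ => //.
by rewrite deg_ge_relCK.
Qed.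
End Cliques.

Definition clique_leaves (n k : nat) : rel 'I_n :=
  [rel u v : 'I_n | (u != v) && [|| val u == 0, val v == 0 | (u < k) && (v < k)]].
Arguments clique_leaves : clear implicits.

Lemma clique_leaves_sym n k : symmetric (clique_leaves n k).
Proof.
by move=> u v; rewrite /clique_leaves /= eq_sym [(v < k) && _]andbC orbCA.
Qed.

Lemma clique_leaves_irrefl n k : irreflexive (clique_leaves n k).
Proof. by move=> u; rewrite /clique_leaves /= eqxx. Qed.

Lemma clique_leaves_root n k (v : 'I_n.+1) : v != ord0 -> clique_leaves n.+1 k ord0 v.
Proof. by rewrite /clique_leaves /= eq_sym => ->. Qed.

Lemma clique_leaves_connected n k : connected_graph (clique_leaves n k).
Proof.
case: n => [[] //|n] u v.
have root_connect w : connect (clique_leaves n.+1 k) ord0 w.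
  have [-> | w0] := eqVneq w ord0; first exact: connect0.
  by apply: connect1; apply: clique_leaves_root.
apply: connect_trans (root_connect v).
by rewrite sym_connect_sym ?root_connect //; apply: clique_leaves_sym.
Qed.

Lemma clique_leaves_chromatic n k m (p : 'I_n -> 'I_m) : k <= n ->
  {homo p : u v / clique_leaves n k u v >-> u != v} -> k <= m.
Proof.
move=> le_kn proper; pose g (w : 'I_k) := p (widen_ord le_kn w).
suff /leq_card : injective g by rewrite !card_ord.
move=> u v /eqP; apply: contraTeq => uv; apply: proper.
by rewrite /clique_leaves /= !ltn_ord !orbT andbT -val_eqE /= val_eqE.
Qed.

Section RootedEnumeration.
Variables (T : finType) (r : rel T) (Q : {set T}) (x : T).
Hypotheses (cliqueQ : clique r Q) (xQ : x \in Q).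

Definition rooted_enum : seq T := enum (Q :\ x) ++ enum (nbhd r x :\: Q).

Lemma mem_rooted_enum : rooted_enum =i nbhd r x.
Proof.
move=> y; rewrite mem_cat !mem_enum.
apply/orP/idP => [[/(subsetP (clique_sub_nbhd cliqueQ xQ)) | /setDP[]] // | yN].
have [yQ | yQ] := boolP (y \in Q); [left | right]; last by rewrite inE yN yQ.
by rewrite !inE yQ andbT; apply: contraTneq yN => ->; rewrite !inE eqxx.
Qed.

Lemma rooted_enum_uniq : uniq (x :: rooted_enum).
Proof.
rewrite /= mem_rooted_enum !inE eqxx /= cat_uniq !enum_uniq andbT /=.
by apply/hasPn=> y; rewrite !mem_enum !inE => /andP[/negbTE-> _]; rewrite andbF.
Qed.

Lemma size_rooted_enum : size rooted_enum = #|nbhd r x|.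
Proof.
have /card_uniqP <- : uniq rooted_enum by case/andP: rooted_enum_uniq.
exact: eq_card mem_rooted_enum.
Qed.

Lemma nth_rooted_enum_clique w : w < #|Q| -> nth x (x :: rooted_enum) w \in Q.
Proof.
case: w => [//|w] /= ltQ.
have ltw : w < #|Q :\ x| by move: ltQ; rewrite (cardsD1 x Q) xQ.
rewrite nth_cat -cardE ltw.
have : nth x (enum (Q :\ x)) w \in enum (Q :\ x) by apply: mem_nth; rewrite -cardE.
by rewrite mem_enum => /setD1P[].
Qed.

End RootedEnumeration.

Lemma clique_leaves_embedding (T : finType) (r : rel T) n k : symmetric r -> 0 < k ->
  has_clique r (deg_ge r n.-1) k ->
  exists f : 'I_n -> T, injective f /\ {homo f : u v / clique_leaves n k u v >-> r u v}.
Proof.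
move=> r_sym k_gt0 [Q [sQ cliqueQ kQ]].
have [x xQ] : exists x, x \in Q by apply/card_gt0P; apply: leq_trans kQ.
have deg_x : n.-1 <= #|nbhd r x| by have := subsetP sQ x xQ; rewrite inE.
set s := x :: rooted_enum r Q x.
have uniq_s : uniq s := rooted_enum_uniq cliqueQ xQ.
have lt_s (u : 'I_n) : u < size s.
  by rewrite /s /= size_rooted_enum //; have := ltn_ord u; lia.
have nbhd_s w : 0 < w < size s -> r x (nth x s w).
  case: w => [//|w] /= lt_w.
  have : nth x (rooted_enum r Q x) w \in rooted_enum r Q x by apply: mem_nth.
  by rewrite mem_rooted_enum // inE => /andP[_]; rewrite inE.
exists (fun u => nth x s u); split.
  by move=> u v /eqP; rewrite nth_uniq // => /eqP/val_inj.
move=> u v /andP[uv /or3P[/eqP u0 | /eqP v0 | /andP[uk vk]]].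
- have v0 : 0 < v.
    by rewrite lt0n; apply: contraNneq uv => v0; apply/eqP/val_inj; rewrite /= u0 v0.
  by rewrite [nth x s u]/= u0; apply: nbhd_s; rewrite v0 lt_s.
- have u0 : 0 < u.
    by rewrite lt0n; apply: contraNneq uv => u0; apply/eqP/val_inj; rewrite /= u0 v0.
  by rewrite [nth x s v]/= v0 r_sym; apply: nbhd_s; rewrite u0 lt_s.
- apply: cliqueQ; rewrite ?nth_rooted_enum_clique ?nth_uniq //; exact: leq_trans kQ.
Qed.

Lemma ramsey2_clique_leaves N n k : 0 < k -> 1 < n ->
  4 ^ k + (k * n.-1).*2 + n.*2 <= N -> ramsey_arrow 2 N (clique_leaves n k).
Proof.
move=> k_gt0 n_gt1 leN col col_sym.
pose r : rel 'I_N := fun x y => col x y == ord0.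
have r_sym : symmetric r by move=> x y; rewrite /r col_sym.
rewrite -[N]card_ord in leN.
have [cl | cl] := ramsey2_has_clique_deg_ge r_sym n_gt1 leN.
- have [f [f_inj f_hom]] := clique_leaves_embedding r_sym k_gt0 cl.
  by exists ord0, f; split=> // u v /f_hom/eqP.
- have [f [f_inj f_hom]] := clique_leaves_embedding (relC_sym r_sym) k_gt0 cl.
  exists (Ordinal (isT : 1 < 2)), f; split=> // u v /f_hom; rewrite /relC /r.
  by case: (col _ _) => [[|[|?]] ?] //= _; apply: val_inj.
Qed.

Section BlockColouring.
Variables d K N : nat.
Hypotheses (d_gt0 : 0 < d) (K_gt0 : 0 < K) (le_N : N <= K ^ 2 * d).

Definition block_colour (x y : 'I_N) : nat :=
  if x %/ d == y %/ d then 0 else if x %/ d %/ K != y %/ d %/ K then 1 else 2.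

Definition block_colouring (x y : 'I_N) : 'I_3 := inord (block_colour x y).

Lemma block_colouring_sym : edge_colouring block_colouring.
Proof.
by move=> x y; rewrite /block_colouring /block_colour eq_sym [_ %/ K == _]eq_sym.
Qed.

Lemma val_block_colouring x y : block_colouring x y = block_colour x y :> nat.
Proof.
by rewrite /block_colouring inordK // /block_colour; case: ifP => //; case: ifP.
Qed.

Lemma block_colour0 x y : block_colour x y = 0 -> x %/ d = y %/ d.
Proof. by rewrite /block_colour; case: eqP => //; case: ifP. Qed.

Lemma block_colour1 x y : block_colour x y = 1 -> x %/ d %/ K != y %/ d %/ K.
Proof. by rewrite /block_colour; case: eqP => //; case: ifP. Qed.

Lemma block_colour2 x y : block_colour x y = 2 -> x %/ d %% K != y %/ d %% K.
Proof.
rewrite /block_colour; case: eqP => // ne_block; case: eqP => // eq_div _.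
by apply/eqP=> eq_mod; apply: ne_block; rewrite (divn_eq (x %/ d) K) eq_div eq_mod -divn_eq.
Qed.

Lemma block_div_lt (x : 'I_N) : x %/ d %/ K < K.
Proof. by rewrite !ltn_divLR // mulnn (leq_trans (ltn_ord x)). Qed.

Lemma ramsey3_clique_leaves_lower : K <= d -> ~ ramsey_arrow 3 N (clique_leaves d.+1 K.+1).
Proof.
move=> le_Kd /(_ _ block_colouring_sym) [c [f [f_inj f_mono]]].
have {f_mono} col_f u v : clique_leaves d.+1 K.+1 u v -> block_colour (f u) (f v) = c.
  by move/f_mono <-; rewrite val_block_colouring.
have le_KSd : K.+1 <= d.+1 by [].
case: c col_f => [[|[|[|//]]] /= _] col_f.
- have same_block v : f v %/ d = f ord0 %/ d.
    have [-> // | v0] := eqVneq v ord0.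
    by apply/esym/block_colour0/col_f/clique_leaves_root.
  pose g (v : 'I_d.+1) : 'I_d := Ordinal (ltn_pmod (f v) d_gt0).
  suff /leq_card : injective g by rewrite !card_ord ltnn.
  move=> u v /(congr1 val) /= eq_mod; apply/f_inj/ord_inj.
  by rewrite (divn_eq (f u) d) (divn_eq (f v) d) !same_block eq_mod.
- suff : K.+1 <= K by rewrite ltnn.
  apply: (clique_leaves_chromatic (p := fun v => Ordinal (block_div_lt (f v))) le_KSd).
  by move=> u v /col_f/block_colour1; apply: contra => /eqP[->].
- suff : K.+1 <= K by rewrite ltnn.
  apply: (clique_leaves_chromatic (p := fun v => Ordinal (ltn_pmod (f v %/ d) K_gt0)) le_KSd).
  by move=> u v /col_f/block_colour2; apply: contra => /eqP[->].
Qed.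
End BlockColouring.

Open Scope R_scope.

Lemma INR_expn m k : INR (m ^ k)%N = INR m ^ k.
Proof. by elim: k => // k IHk; rewrite expnS mult_INR IHk. Qed.

Lemma ln_le x y : 0 < x -> x <= y -> ln x <= ln y.
Proof.
by move=> x_gt0 [lt_xy | ->]; [apply/Rlt_le/ln_increasing | apply: Rle_refl].
Qed.

Lemma ln4_bounds : 1 <= ln 4 < 2.
Proof.
have e_gt2 : 2 < exp 1 by have := exp_ineq1 1; lra.
have e_lt4 : exp 1 < 4 by have := exp_le_3; lra.
split; first by rewrite -[1]ln_exp; apply/Rlt_le/ln_increasing => //; apply: exp_pos.
have ln2_lt1 : ln 2 < 1 by rewrite -[1]ln_exp; apply: ln_increasing; lra.
by rewrite (_ : 4 = 2 * 2); [rewrite ln_mult; lra | lra].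
Qed.

Lemma ln_ge1 n : (3 <= n)%N -> 1 <= ln (INR n).
Proof.
move=> le3n; rewrite -[1]ln_exp; apply: ln_le; first exact: exp_pos.
have := le_INR _ _ (leP le3n); have := exp_le_3; rewrite [INR 3]/=; lra.
Qed.

Lemma INR_4 : INR 4 = 4.
Proof. by rewrite /=; lra. Qed.

Lemma trunc_log4_le_ln n : (0 < n)%N -> INR (trunc_log 4 n) <= ln (INR n).
Proof.
move=> n_gt0; have /andP[le_n _] := trunc_log_bounds (isT : (1 < 4)%N) n_gt0.
have := le_INR _ _ (leP le_n); rewrite INR_expn INR_4 => le_pow.
have pow_pos : 0 < 4 ^ trunc_log 4 n by apply: pow_lt; lra.
have := ln_le pow_pos le_pow; rewrite ln_pow; last lra.
have := pos_INR (trunc_log 4 n); have := ln4_bounds; nra.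
Qed.

Lemma ln_lt_trunc_log4 n : (0 < n)%N -> ln (INR n) < 2 * INR (trunc_log 4 n).+1.
Proof.
move=> n_gt0; have /andP[_ lt_n] := trunc_log_bounds (isT : (1 < 4)%N) n_gt0.
have n_pos : 0 < INR n by apply/lt_0_INR/ltP.
have := ln_increasing _ _ n_pos (lt_INR _ _ (ltP lt_n)).
rewrite INR_expn INR_4 ln_pow; last lra.
have := pos_INR (trunc_log 4 n).+1; have := ln4_bounds; nra.
Qed.

Lemma ramsey2_log_clique_leaves n : (64 <= n)%N ->
  ramsey_le 2 (clique_leaves n (trunc_log 4 n)) (5 * INR n * ln (INR n)).
Proof.
move=> le64n; have n_gt0 : (0 < n)%N by lia.
have k_ge3 : (3 <= trunc_log 4 n)%N by apply: trunc_log_max; rewrite // (leq_trans _ le64n).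
have /andP[le_n _] := trunc_log_bounds (isT : (1 < 4)%N) n_gt0.
set k := trunc_log 4 n in k_ge3 le_n *.
exists (4 ^ k + (k * n.-1).*2 + n.*2)%N; split; last by apply: ramsey2_clique_leaves; lia.
have le_N : (4 ^ k + (k * n.-1).*2 + n.*2 <= (3 + 2 * k) * n)%N.
  by have := leq_mul (leqnn k) (leq_pred n); nia.
apply: Rle_trans (le_INR _ _ (leP le_N)) _; rewrite mult_INR plus_INR mult_INR.
have k_le_ln : INR k <= ln (INR n) := trunc_log4_le_ln n_gt0.
have ln_n_ge1 : 1 <= ln (INR n) by apply: ln_ge1; lia.
have := pos_INR n; rewrite [INR 3]/= [INR 2]/=; nra.
Qed.

Lemma ramsey3_log_clique_leaves n : (64 <= n)%N ->
  ramsey_ge 3 (clique_leaves n (trunc_log 4 n)) (1 / 32 * INR n * ln (INR n) ^ 2).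
Proof.
case: n => [//|d] le64d N lt_N.
have k_ge3 : (3 <= trunc_log 4 d.+1)%N.
  by apply: trunc_log_max; rewrite // (leq_trans _ le64d).
have /andP[le_n _] := trunc_log_bounds (isT : (1 < 4)%N) (ltn0Sn d).
have ln_lt := ln_lt_trunc_log4 (ltn0Sn d).
have ln_n_ge1 : 1 <= ln (INR d.+1) by apply: ln_ge1; lia.
set k := trunc_log 4 d.+1 in k_ge3 le_n ln_lt *.
have k_lt := ltn_expl k (isT : (1 < 4)%N).
have [K k_eq] : exists K, k = K.+1 by exists k.-1; lia.
rewrite k_eq in k_ge3 le_n ln_lt k_lt *.
apply: ramsey3_clique_leaves_lower; [lia | lia | | lia].
suff : INR N < INR (K ^ 2 * d) by move/INR_lt/ltP/ltnW.
have K_ge2 : 2 <= INR K.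
  have : (2 <= K)%N by lia.
  by move/leP/le_INR; rewrite [INR 2]/=; lra.
have d_ge1 : 1 <= INR d.
  have : (1 <= d)%N by lia.
  by move/leP/le_INR; rewrite [INR 1]/=; lra.
rewrite !S_INR in lt_N ln_lt ln_n_ge1; rewrite mult_INR INR_expn.
have ln_lt4K : ln (INR d + 1) < 4 * INR K by lra.
have ln_sq : ln (INR d + 1) ^ 2 <= 16 * INR K ^ 2 by nra.
nra.
Qed.

Close Scope R_scope.

Theorem theorem1p4 :
  exists G : forall n : nat, rel 'I_n,
    (forall n, simple_graph (G n) /\ connected_graph (G n)) /\
    (exists C : R, (0 < C)%R /\ exists n0 : nat, forall n : nat, (n0 <= n)%N ->
        ramsey_le 2 (G n) (C * INR n * ln (INR n))%R) /\
    (exists c : R, (0 < c)%R /\ exists n0 : nat, forall n : nat, (n0 <= n)%N ->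
        ramsey_ge 3 (G n) (c * INR n * (ln (INR n)) ^ 2)%R).
Proof.
exists (fun n => clique_leaves n (trunc_log 4 n)); split; [|split].
- move=> n; split; last exact: clique_leaves_connected.
  by split; [apply: clique_leaves_sym | apply: clique_leaves_irrefl].
- exists 5%R; split; first lra.
  by exists 64 => n; apply: ramsey2_log_clique_leaves.
- exists (1 / 32)%R; split; first lra.
  by exists 64 => n; apply: ramsey3_log_clique_leaves.
Qed.
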